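(* Let $\mathsf{B}\in\mathrm{IQC}(n,\mathbb{C})$. Then $\mathsf{B}$ admits an isotropic $2$-decomposition if and only if the period of $\mathsf{B}$ is even.
   Context: $\mathrm{D}(n,\mathbb{C})$ is the set of $n\times n$ positive semidefinite complex matrices of trace $1$. $\mathrm{IQC}(n,\mathbb{C})$ is the set of finite sets $\mathsf{B}\subseteq\mathrm{M}(n,\mathbb{C})$ with $\sum_{B\in\mathsf{B}}B^\dagger B=I$ such that $\rho\mapsto\sum_{B\in\mathsf{B}}B\rho B^\dagger$ has a unique fixed point in $\mathrm{D}(n,\mathbb{C})$, which is positive definite. An isotropic $2$-decomposition of $\mathsf{B}$ is an orthogonal direct sum decomposition $\mathbb{C}^n=U_1\oplus U_2$ into nonzero subspaces with $u^\dagger Bu'=0$ for all $u,u'\in U_i$, $B\in\mathsf{B}$, $i=1,2$. The period of $\mathsf{B}$ is the maximum integer $m$ for which there is an orthogonal direct sum decomposition $\mathbb{C}^n=U_1\oplus\cdots\oplus U_m$ into nonzero subspaces such that $B(U_{i-1})\le U_i$ for all $i\in[m]$ and all $B\in\mathsf{B}$, indices taken cyclically modulo $m$ in $[m]$. *)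

(* The complex field C is abstracted as an arbitrary
   numClosedFieldType (algebraically closed field with conjugation and the
   partial order of C). *)
From HB Require Import structures.
From mathcomp Require Import all_boot all_order all_algebra.
Set Implicit Arguments. Unset Strict Implicit. Unset Printing Implicit Defensive.
Import Order.TTheory GRing.Theory Num.Theory.
Local Open Scope ring_scope.

Section Defs.
Variable C : numClosedFieldType.

Definition adj (m p : nat) (A : 'M[C]_(m, p)) : 'M[C]_(p, m) :=
  (map_mx Num.conj A)^T.

Definition psd (n : nat) (A : 'M[C]_n) : Prop :=
  adj A = A /\ forall x : 'cV[C]_n, 0 <= (adj x *m A *m x) 0 0.
Definition pd (n : nat) (A : 'M[C]_n) : Prop :=
  adj A = A /\ forall x : 'cV[C]_n, x != 0 -> 0 < (adj x *m A *m x) 0 0.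

Definition density (n : nat) (rho : 'M[C]_n) : Prop := psd rho /\ \tr rho = 1.

Definition channel (n : nat) (Bs : seq 'M[C]_n) (rho : 'M[C]_n) : 'M[C]_n :=
  \sum_(B <- Bs) B *m rho *m adj B.

(* IQC(n,C); a finite set of matrices is a duplicate-free sequence *)
Definition IQC (n : nat) (Bs : seq 'M[C]_n) : Prop :=
  [/\ uniq Bs,
      \sum_(B <- Bs) adj B *m B = 1%:M &
      exists rho : 'M[C]_n,
        [/\ density rho, channel Bs rho = rho, pd rho &
            forall sigma, density sigma -> channel Bs sigma = sigma -> sigma = rho]].

(* membership of a column vector x in the subspace (row space) U *)
Definition inS (n : nat) (x : 'cV[C]_n) (U : 'M[C]_n) : bool := (x^T <= U)%MS.

Definition orth_decomp (n m : nat) (U : 'I_m -> 'M[C]_n) : Prop :=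
  [/\ (forall i, U i != 0),
      mxdirect (\sum_(i < m) U i),
      (\sum_(i < m) U i :=: 1%:M)%MS &
      forall i j, i != j -> forall x y : 'cV[C]_n,
        inS x (U i) -> inS y (U j) -> adj x *m y = 0].

Definition iso2_decomp (n : nat) (Bs : seq 'M[C]_n) (U : 'I_2 -> 'M[C]_n) : Prop :=
  orth_decomp U /\
  forall i (x y : 'cV[C]_n) B, B \in Bs -> inS x (U i) -> inS y (U i) ->
    adj x *m B *m y = 0.

Definition cyclic_decomp (n m : nat) (Bs : seq 'M[C]_n) (U : 'I_m -> 'M[C]_n) : Prop :=
  orth_decomp U /\
  forall i (x : 'cV[C]_n) B, B \in Bs -> inS x (U i) -> inS (B *m x) (U (ordS i)).

Definition is_period (n : nat) (Bs : seq 'M[C]_n) (p : nat) : Prop :=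
  (exists U : 'I_p -> 'M[C]_n, cyclic_decomp Bs U) /\
  forall m (U : 'I_m -> 'M[C]_n), cyclic_decomp Bs U -> (m <= p)%N.

End Defs.

(* A subspace stable under every B and
      B^dagger carries the compression P rho P of the unique fixed state rho,
      which after normalisation is again a fixed state; uniqueness and
      definiteness of rho then force the subspace to be 0 or everything.
      Hence an operator commuting with all B and B^dagger has an eigenspace
      equal to C^n, i.e. it is a scalar.
   3. A cyclic decomposition U_0, ..., U_{m-1} yields orthogonal projections
      P_i with sum 1 and B P_i = P_{i+1} B.
   4. Even period m: grouping the U_i by parity of i gives an isotropic
      2-decomposition.
   5. Odd period p with an isotropic 2-decomposition V_0 (+) V_1: V is cyclic
      of length 2, so the grading Z = P_{V_0} - P_{V_1} anticommutes with
      every B.  For each shift s, Y_s = sum_i P_{i+s} Z P_i also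
      anticommutes, so Z Y_s is scalar by Schur and Y_s = c Z.  Since p is
      odd, Y_s = 0 for s <> 0 mod p; thus Z, and with it P_{V_0}, P_{V_1},
      preserves every U_i.  The subspaces U_(k mod p) :&: V_(k mod 2) then
      form a cyclic decomposition of length 2p, contradicting maximality. *)

From HB Require Import structures.
From mathcomp Require Import all_boot all_order all_algebra.
From Stdlib Require Import ClassicalEpsilon.
Set Implicit Arguments. Unset Strict Implicit. Unset Printing Implicit Defensive.
Import Order.TTheory GRing.Theory Num.Theory.
Local Open Scope ring_scope.

Section Development.
Variable C : numClosedFieldType.

Lemma adjE m p (A : 'M[C]_(m, p)) i j : adj A i j = (A j i)^*.
Proof. by rewrite /adj !mxE. Qed.

Lemma adjK m p (A : 'M[C]_(m, p)) : adj (adj A) = A.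
Proof. by apply/matrixP=> i j; rewrite !adjE conjCK. Qed.

Lemma adjM m p q (A : 'M[C]_(m, p)) (B : 'M[C]_(p, q)) :
  adj (A *m B) = adj B *m adj A.
Proof. by rewrite /adj map_mxM trmx_mul. Qed.

Lemma adjD m p (A B : 'M[C]_(m, p)) : adj (A + B) = adj A + adj B.
Proof. by apply/matrixP=> i j; rewrite !(adjE, mxE) rmorphD. Qed.

Lemma adjZ m p a (A : 'M[C]_(m, p)) : adj (a *: A) = a^* *: adj A.
Proof. by apply/matrixP=> i j; rewrite !(adjE, mxE) rmorphM. Qed.

Lemma adj0 m p : adj (0 : 'M[C]_(m, p)) = 0.
Proof. by apply/matrixP=> i j; rewrite !(adjE, mxE) rmorph0. Qed.

Lemma adj_sum m p (I : Type) (r : seq I) (P : pred I) (F : I -> 'M[C]_(m, p)) :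
  adj (\sum_(i <- r | P i) F i) = \sum_(i <- r | P i) adj (F i).
Proof. by elim/big_rec2: _ => [|i A B _ <-]; rewrite ?adj0 ?adjD. Qed.

Lemma adj_delta n (i : 'I_n) :
  adj (delta_mx i ord0 : 'cV[C]_n) = delta_mx ord0 i.
Proof. by apply/matrixP=> a b; rewrite adjE !mxE rmorph_nat andbC. Qed.

Lemma adj_orth_sym n (x y : 'cV[C]_n) : adj x *m y = 0 -> adj y *m x = 0.
Proof. by move=> h; rewrite -[adj y *m x]adjK adjM adjK h adj0. Qed.

Lemma adj_self0 n (x : 'cV[C]_n) : adj x *m x = 0 -> x = 0.
Proof.
move=> h; have : (adj x *m x) 0 0 = \sum_i `|x i 0| ^+ 2.
  by rewrite mxE; apply: eq_bigr => i _; rewrite adjE normCK mulrC.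
rewrite h mxE => /esym/eqP; rewrite psumr_eq0 => [|i _]; last exact: exprn_ge0.
move/allP=> h0; apply/matrixP=> i j; rewrite ord1 mxE.
by have := h0 i (mem_index_enum _); rewrite /= expf_eq0 /= normr_eq0 => /eqP.
Qed.

Section Geometry.
Variable n : nat.
Implicit Types (x y z : 'cV[C]_n) (K U V M : 'M[C]_n).

Lemma mx_ext M1 M2 : (forall x y, adj x *m M1 *m y = adj x *m M2 *m y) -> M1 = M2.
Proof.
move=> h; apply/matrixP=> i j.
have e M : (adj (delta_mx i ord0 : 'cV[C]_n) *m M *m (delta_mx j ord0 : 'cV[C]_n))
    ord0 ord0 = M i j.
  by rewrite adj_delta -rowE -colE !mxE.
by rewrite -e h e.
Qed.

Lemma vec_ext M1 M2 : (forall y, M1 *m y = M2 *m y) -> M1 = M2.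
Proof. by move=> h; apply: mx_ext => x y; rewrite -!mulmxA h. Qed.

Lemma inS0 U : inS 0 U.
Proof. by rewrite /inS trmx0 sub0mx. Qed.

Lemma inSD x y U : inS x U -> inS y U -> inS (x + y) U.
Proof. by rewrite /inS linearD /=; apply: addmx_sub. Qed.

Lemma inSZ a x U : inS x U -> inS (a *: x) U.
Proof. by rewrite /inS linearZ /=; apply: scalemx_sub. Qed.

Lemma inSB x y U : inS x U -> inS y U -> inS (x - y) U.
Proof. by move=> hx hy; rewrite -scaleN1r; apply/inSD/inSZ. Qed.

Lemma inS_sum (I : Type) (r : seq I) (P : pred I) (f : I -> 'cV[C]_n) U :
  (forall i, P i -> inS (f i) U) -> inS (\sum_(i <- r | P i) f i) U.
Proof.
move=> h; elim/big_rec: _ => [|i x Pi hx]; first exact: inS0.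
by apply: inSD => //; apply: h.
Qed.

Lemma inS_sub x U V : inS x U -> (U <= V)%MS -> inS x V.
Proof. exact: submx_trans. Qed.

Lemma inS_cap x U V : inS x (U :&: V)%MS = inS x U && inS x V.
Proof. by rewrite /inS sub_capmx. Qed.

Lemma inS1 x : inS x 1%:M.
Proof. exact: submx1. Qed.

Lemma inS_zero x : inS x 0 -> x = 0.
Proof. by rewrite /inS submx0 trmx_eq0 => /eqP. Qed.

Lemma subS U V : (forall x, inS x U -> inS x V) -> (U <= V)%MS.
Proof.
move=> h; apply/row_subP=> i.
by have := h (row i U)^T; rewrite /inS trmxK; apply; apply: row_sub.
Qed.

Lemma eq0S U : (forall x, inS x U -> x = 0) -> U = 0.
Proof. by move=> h; apply/eqP; rewrite -submx0; apply: subS => x /h ->; apply: inS0. Qed.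

Lemma nz_inS U : U != 0 -> exists x, inS x U /\ x != 0.
Proof.
case/rowV0Pn=> v hv nz; exists v^T; rewrite /inS trmxK trmx_eq0; split => //.
Qed.

Lemma inS_sums (I : finType) (P : pred I) (U : I -> 'M[C]_n) x :
  inS x (\sum_(i | P i) U i)%MS ->
  exists xs : I -> 'cV[C]_n,
    (forall i, P i -> inS (xs i) (U i)) /\ x = \sum_(i | P i) xs i.
Proof.
rewrite /inS => /sub_sumsmxP[u hu]; exists (fun i => (u i *m U i)^T); split.
  by move=> i _; rewrite /inS trmxK submxMl.
by rewrite -[x]trmxK hu linear_sum.
Qed.

Lemma inS_sumsI (I : finType) (P : pred I) (U : I -> 'M[C]_n) i x :
  P i -> inS x (U i) -> inS x (\sum_(i | P i) U i)%MS.
Proof. by move=> Pi h; apply: inS_sub h _; apply: (sumsmx_sup i). Qed.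

Lemma orth_sum_l (I : finType) (P : pred I) (U : I -> 'M[C]_n) x z :
  inS x (\sum_(i | P i) U i)%MS ->
  (forall i, P i -> forall w, inS w (U i) -> adj w *m z = 0) -> adj x *m z = 0.
Proof.
move=> /inS_sums[xs [hxs ->]] h; rewrite adj_sum mulmx_suml big1 // => i Pi.
exact: h (hxs i Pi).
Qed.

Lemma orth_sum_r (I : finType) (P : pred I) (U : I -> 'M[C]_n) y z :
  inS y (\sum_(i | P i) U i)%MS ->
  (forall i, P i -> forall w, inS w (U i) -> adj z *m w = 0) -> adj z *m y = 0.
Proof.
move=> hy h; apply: adj_orth_sym; apply: (orth_sum_l hy) => i Pi w hw.
exact/adj_orth_sym/(h i Pi).
Qed.

Lemma orth_mxdirect (I : finType) (U : I -> 'M[C]_n) :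
  (forall i j, i != j -> forall x y, inS x (U i) -> inS y (U j) -> adj x *m y = 0) ->
  mxdirect (\sum_i U i).
Proof.
move=> h; apply/mxdirect_sumsP => i _; apply: eq0S => x.
rewrite inS_cap => /andP[h1 h2]; apply: adj_self0; apply: (orth_sum_l h2).
by move=> j /andP[_ ji] w hw; apply: h ji _ _ hw h1.
Qed.

Definition perp K : 'M[C]_n := kermx (map_mx Num.conj K)^T.

Lemma perpP K y : reflect (forall x, inS x K -> adj x *m y = 0) (inS y (perp K)).
Proof.
rewrite /inS /perp sub_kermx -trmx_mul trmx_eq0; apply: (iffP eqP) => [h x|h].
  case/submxP=> w hw; have -> : adj x = map_mx Num.conj w *m map_mx Num.conj K.
    by rewrite -map_mxM -hw /adj map_trmx.
  by rewrite -mulmxA h mulmx0.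
apply/row_matrixP=> i; rewrite row_mul row0.
have <- : adj (row i K)^T = row i (map_mx Num.conj K).
  by apply/matrixP=> a b; rewrite adjE !mxE.
by apply: h; rewrite /inS trmxK row_sub.
Qed.

Lemma perp_orth K x y : inS x K -> inS y (perp K) -> adj x *m y = 0.
Proof. by move=> hx /perpP; apply. Qed.

Lemma perp_cap K : (K :&: perp K)%MS = 0.
Proof.
apply: eq0S => x; rewrite inS_cap => /andP[h1 h2].
exact/adj_self0/(perp_orth h1 h2).
Qed.

Lemma perp_full K : (1%:M <= K + perp K)%MS.
Proof.
rewrite sub1mx /row_full mxrank_disjoint_sum ?perp_cap //.
rewrite /perp mxrank_ker mxrank_tr mxrank_map subnKC //.
by have := mxrankS (submx1 K); rewrite mxrank1.
Qed.

Definition oproj K : 'M[C]_n := (proj_mx K (perp K))^T.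

Lemma oproj_in K y : inS (oproj K *m y) K.
Proof. by rewrite /inS trmx_mul trmxK proj_mx_sub. Qed.

Lemma oproj_id K y : inS y K -> oproj K *m y = y.
Proof. by move=> h; apply: trmx_inj; rewrite trmx_mul trmxK proj_mx_id ?perp_cap. Qed.

Lemma oproj_0 K y : inS y (perp K) -> oproj K *m y = 0.
Proof. by move=> h; apply: trmx_inj; rewrite trmx_mul trmxK proj_mx_0 ?trmx0 ?perp_cap. Qed.

Lemma oproj_compl K y : inS (y - oproj K *m y) (perp K).
Proof.
rewrite /inS linearB /= trmx_mul trmxK; apply: proj_mx_compl_sub.
exact: submx_trans (submx1 _) (perp_full K).
Qed.

Lemma oproj_adj K : adj (oproj K) = oproj K.
Proof.
apply: mx_ext => x y; set P := oproj K.
have ex : x = P *m x + (x - P *m x) by rewrite addrC subrK.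
have ey : y = P *m y + (y - P *m y) by rewrite addrC subrK.
rewrite -adjM -mulmxA [in LHS]ey [in RHS]ex mulmxDr adjD mulmxDl.
rewrite (perp_orth (oproj_in K x) (oproj_compl K y)).
by rewrite (adj_orth_sym (perp_orth (oproj_in K y) (oproj_compl K x))).
Qed.

Lemma perp_stable K M :
  (forall x, inS x K -> inS (adj M *m x) K) ->
  forall y, inS y (perp K) -> inS (M *m y) (perp K).
Proof.
move=> hK y hy; apply/perpP => x hx.
by rewrite mulmxA -[M]adjK -adjM; apply: perp_orth hy; apply: hK.
Qed.

Lemma oproj_comm K M :
  (forall x, inS x K -> inS (M *m x) K) ->
  (forall y, inS y (perp K) -> inS (M *m y) (perp K)) ->
  oproj K *m M = M *m oproj K.
Proof.
move=> hK hL; apply: vec_ext => y; set P := oproj K.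
have ey : y = P *m y + (y - P *m y) by rewrite addrC subrK.
rewrite -!mulmxA [in LHS]ey mulmxDr mulmxDr (oproj_0 (hL _ (oproj_compl K y))) addr0.
by rewrite oproj_id //; apply/hK/oproj_in.
Qed.

End Geometry.

Lemma compress_quad n (P rho : 'M[C]_n) (x : 'cV[C]_n) : adj P = P ->
  adj x *m (P *m rho *m P) *m x = adj (P *m x) *m rho *m (P *m x).
Proof. by move=> PH; rewrite adjM PH !mulmxA. Qed.

Lemma compress_psd n (P rho : 'M[C]_n) : adj P = P -> psd rho -> psd (P *m rho *m P).
Proof.
move=> PH [rH rge]; split; first by rewrite !adjM PH rH mulmxA.
by move=> x; rewrite compress_quad.
Qed.

Lemma compress_tr_gt0 n (P rho : 'M[C]_n) :
  adj P = P -> psd rho -> pd rho -> P != 0 -> 0 < \tr (P *m rho *m P).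
Proof.
move=> PH [_ rge] [_ rpd] /matrix0Pn[i [j nz]].
have ej : P *m (delta_mx j ord0 : 'cV[C]_n) != 0.
  by rewrite -colE; apply: contra nz => /eqP/matrixP/(_ i ord0); rewrite !mxE => ->.
have diag k : let e := (delta_mx k ord0 : 'cV[C]_n) in
    (P *m rho *m P) k k = (adj (P *m e) *m rho *m (P *m e)) ord0 ord0.
  by rewrite /= -compress_quad // adj_delta -rowE -colE !mxE.
rewrite /mxtrace (bigD1 j) //= ltr_pwDl ?diag ?rpd //.
by apply: sumr_ge0 => k _; rewrite diag.
Qed.

Lemma density_normalize n (sigma : 'M[C]_n) :
  psd sigma -> 0 < \tr sigma -> density ((\tr sigma)^-1 *: sigma).
Proof.
move=> [sH sge] tpos; split; last by rewrite mxtraceZ mulVf // gt_eqF.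
split; first by rewrite adjZ sH geC0_conj // invr_ge0 ltW.
by move=> x; rewrite -scalemxAr -scalemxAl mxE mulr_ge0 // invr_ge0 ltW.
Qed.

Lemma channelZ n (Bs : seq 'M[C]_n) c (rho : 'M[C]_n) :
  channel Bs (c *: rho) = c *: channel Bs rho.
Proof.
rewrite /channel scaler_sumr; apply: eq_bigr => B _.
by rewrite -scalemxAr -scalemxAl.
Qed.

Lemma channel_compress n (Bs : seq 'M[C]_n) (P rho : 'M[C]_n) :
  (forall B, B \in Bs -> P *m B = B *m P /\ P *m adj B = adj B *m P) ->
  channel Bs (P *m rho *m P) = P *m channel Bs rho *m P.
Proof.
move=> hP; rewrite /channel mulmx_sumr mulmx_suml; apply: eq_big_seq => B hB.
by have [e1 e2] := hP B hB; rewrite !mulmxA -e1 -!mulmxA e2.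
Qed.

Section Schur.
Variables (n : nat) (Bs : seq 'M[C]_n).
Hypothesis hIQC : IQC Bs.

(* A state exists, so the space is nonzero. *)
Lemma IQC_npos : (0 < n)%N.
Proof.
case: hIQC => _ _ [rho [[_ tr1] _ _ _]]; case: (posnP n) => // n0.
move: tr1; rewrite /mxtrace big1 => [/eqP|i]; first by rewrite eq_sym oner_eq0.
by have := ltn_ord i; rewrite {2}n0.
Qed.

(* The Kraus operators have no common kernel, since sum_B B^dagger B = 1. *)
Lemma kraus_injective (x : 'cV[C]_n) : (forall B, B \in Bs -> B *m x = 0) -> x = 0.
Proof.
case: hIQC => _ e _ h; rewrite -[x]mul1mx -e mulmx_suml big1_seq // => B hB.
by rewrite -mulmxA h ?mulmx0.
Qed.

Definition reducing (K : 'M[C]_n) : Prop :=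
  forall B, B \in Bs -> forall x, inS x K -> inS (B *m x) K /\ inS (adj B *m x) K.

Lemma reducing_oproj_comm K B : reducing K -> B \in Bs ->
  oproj K *m B = B *m oproj K /\ oproj K *m adj B = adj B *m oproj K.
Proof.
move=> hK hB; split; apply: oproj_comm => x hx.
- by case: (hK B hB x hx).
- by apply: perp_stable hx => z hz; case: (hK B hB z hz).
- by case: (hK B hB x hx).
- by apply: perp_stable hx => z hz; rewrite adjK; case: (hK B hB z hz).
Qed.

(* Compressing the fixed state onto it gives a fixed state, hence the fixed
   state itself, which is definite and so cannot vanish on perp K. *)
Lemma reducing_trivial K : reducing K -> K != 0 ->
  forall y, inS y (perp K) -> y = 0.
Proof.
case: hIQC => _ _ [rho [rho_dens rho_fix rho_pd rho_uniq]] hK Knz y hy.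
apply/eqP; apply: contraT => ynz.
set P := oproj K; have PH : adj P = P := oproj_adj K.
have Pnz : P != 0.
  have [x [hx xnz]] := nz_inS Knz.
  by apply: contra xnz => /eqP P0; rewrite -(oproj_id hx) -/P P0 mul0mx.
have tpos : 0 < \tr (P *m rho *m P) by apply: compress_tr_gt0 => //; case: rho_dens.
have fix_sigma : channel Bs ((\tr (P *m rho *m P))^-1 *: (P *m rho *m P)) =
                 (\tr (P *m rho *m P))^-1 *: (P *m rho *m P).
  by rewrite channelZ channel_compress ?rho_fix // => B; apply: reducing_oproj_comm.
have e := rho_uniq _ (density_normalize (compress_psd PH rho_dens.1) tpos) fix_sigma.
have := rho_pd.2 y ynz; rewrite -e -scalemxAr -scalemxAl mxE compress_quad //.
by rewrite oproj_0 // adj0 !mul0mx mxE mulr0 ltxx.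
Qed.

(* Schur's lemma: the commutant of the Kraus operators and their adjoints
   consists of scalars.  An eigenspace of Y is reducing, hence everything. *)
Lemma commutant_scalar (Y : 'M[C]_n) :
  (forall B, B \in Bs -> Y *m B = B *m Y /\ Y *m adj B = adj B *m Y) ->
  exists c, Y = c%:M.
Proof.
move=> hY; have [l] : exists l, root (char_poly Y^T) l.
  by apply/closed_rootP; rewrite size_char_poly eqSS -lt0n IQC_npos.
rewrite -eigenvalue_root_char => /eigenvalueP[v hv vnz].
set K := eigenspace Y^T l.
have inK x : inS x K = (Y *m x == l *: x).
  apply/eigenspaceP/eqP => h; first by apply: trmx_inj; rewrite trmx_mul linearZ /= h.
  by rewrite -trmx_mul h linearZ.
have hK : reducing K.
  move=> B hB x; rewrite !inK => /eqP hx; have [e1 e2] := hY B hB.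
  by rewrite !mulmxA e1 e2 -!mulmxA hx -!scalemxAr !eqxx.
have Knz : K != 0.
  apply: contraNneq vnz => K0; rewrite -trmx_eq0; apply/eqP/inS_zero.
  by rewrite -K0 /inS trmxK; apply/eigenspaceP.
exists l; apply: vec_ext => y.
have /subr0_eq ey := reducing_trivial hK Knz (oproj_compl K y).
by move: (oproj_in K y); rewrite -ey inK mul_scalar_mx => /eqP.
Qed.

End Schur.

Lemma iter_ordS_val m t (i : 'I_m) : val (iter t (@ordS m) i) = ((i + t) %% m)%N.
Proof.
elim: t => [|t IH]; first by rewrite addn0 modn_small.
by rewrite iterS /= IH -addn1 modnDml addn1 addnS.
Qed.

Lemma cyclic_chain_zero n (Bs : seq 'M[C]_n) m (W : 'I_m -> 'M[C]_n) k k' :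
  IQC Bs ->
  (forall k x B, B \in Bs -> inS x (W k) -> inS (B *m x) (W (ordS k))) ->
  W k = 0 -> W k' = 0.
Proof.
move=> hIQC hW Wk.
have step k1 : W (ordS k1) = 0 -> W k1 = 0.
  move=> h; apply: eq0S => x hx; apply: (kraus_injective hIQC) => B hB.
  by apply: inS_zero; rewrite -h; apply: hW.
have back t k1 : W (iter t (@ordS m) k1) = 0 -> W k1 = 0.
  by elim: t k1 => [//|t IH] k1; rewrite iterSr => /IH; apply: step.
apply: (back (k + m - k')%N); rewrite -Wk; congr (W _); apply: val_inj.
rewrite iter_ordS_val subnKC ?modnDr ?modn_small //.
exact: leq_trans (ltnW (ltn_ord k')) (leq_addl _ _).
Qed.

Section OrthDecomp.
Variables (n m : nat) (U : 'I_m -> 'M[C]_n).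
Hypothesis hO : orth_decomp U.

Lemma od_nz i : U i != 0.
Proof. by case: hO. Qed.

Lemma od_cover : (1%:M <= \sum_i U i)%MS.
Proof. by case: hO => _ _ -> _. Qed.

Lemma od_orth i j x y : i != j -> inS x (U i) -> inS y (U j) -> adj x *m y = 0.
Proof. by case: hO => _ _ _ h ij; apply: h. Qed.

Lemma od_disj i j x : i != j -> inS x (U i) -> inS x (U j) -> x = 0.
Proof. by move=> ij h1 h2; apply/adj_self0/(od_orth ij h1 h2). Qed.

Lemma oproj_other i j y : i != j -> inS y (U j) -> oproj (U i) *m y = 0.
Proof. by move=> ij hy; apply/oproj_0/perpP => x hx; apply: od_orth ij hx hy. Qed.

Lemma orth_split y : exists xs : 'I_m -> 'cV[C]_n,
  [/\ forall i, inS (xs i) (U i), y = \sum_i xs i &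
      forall j, oproj (U j) *m y = xs j].
Proof.
have [xs [hxs ey]] := inS_sums (inS_sub (inS1 y) od_cover).
exists xs; split => // [i|j]; first exact: hxs.
rewrite ey mulmx_sumr (bigD1 j) //= oproj_id ?hxs // big1 ?addr0 // => i ij.
by apply: oproj_other; [rewrite eq_sym | apply: hxs].
Qed.

Lemma sum_oproj : \sum_i oproj (U i) = 1%:M.
Proof.
apply: vec_ext => y; rewrite mul1mx mulmx_suml.
have [xs [hxs ey ePj]] := orth_split y.
by rewrite [in RHS]ey; apply: eq_bigr => i _; rewrite ePj.
Qed.

Lemma oproj_mul i j : oproj (U i) *m oproj (U j) = if i == j then oproj (U i) else 0.
Proof.
apply: vec_ext => y; rewrite -mulmxA; case: eqP => [<-|/eqP ij].
  by rewrite oproj_id // oproj_in.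
by rewrite mul0mx; apply: oproj_other ij (oproj_in _ _).
Qed.

End OrthDecomp.

Section Cyclic.
Variables (n m : nat) (Bs : seq 'M[C]_n) (U : 'I_m -> 'M[C]_n).
Hypothesis hU : cyclic_decomp Bs U.

Lemma cyc_map i x B : B \in Bs -> inS x (U i) -> inS (B *m x) (U (ordS i)).
Proof. by case: hU => _ h; apply: h. Qed.

Lemma oproj_shift B i : B \in Bs -> B *m oproj (U i) = oproj (U (ordS i)) *m B.
Proof.
move=> hB; apply: vec_ext => y; have [xs [hxs ey ePj]] := orth_split hU.1 y.
rewrite -!mulmxA ePj [in RHS]ey !mulmx_sumr (bigD1 i) //= oproj_id ?cyc_map ?hxs //.
rewrite big1 ?addr0 // => j ji; apply: (oproj_other hU.1); last by apply: cyc_map.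
by apply: contra ji => /eqP /ordS_inj ->.
Qed.

Lemma oproj_shift_adj B i : B \in Bs -> oproj (U i) *m adj B = adj B *m oproj (U (ordS i)).
Proof. by move=> hB; have := congr1 (@adj _ _ _) (oproj_shift i hB); rewrite !adjM !oproj_adj. Qed.

End Cyclic.

Lemma ord2_neq (j k : 'I_2) : j != k -> odd j != odd k.
Proof. by case: j k => [[|[|j]] hj] [[|[|k]] hk]. Qed.

Lemma ord2_other (j k : 'I_2) : k != j -> k = ordS j.
Proof. by case: j k => [[|[|j]] hj] [[|[|k]] hk] //= _; apply: val_inj. Qed.

Lemma ord2P (j : 'I_2) : j = ord0 \/ j = ord_max.
Proof. by case: j => [[|[|j]] hj]; [left | right | ]; try apply: val_inj. Qed.

(* Even period: the blocks of even and of odd index form an isotropic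
   2-decomposition, since B maps each parity class into the other one. *)
Section ParityBlocks.
Variables (n m : nat) (Bs : seq 'M[C]_n) (U : 'I_m -> 'M[C]_n).
Hypotheses (hU : cyclic_decomp Bs U) (m_even : ~~ odd m) (m_gt1 : (1 < m)%N).

(* m being even, the successor flips parity, also at the wrap-around. *)
Lemma odd_ordS (i : 'I_m) : odd (ordS i) = ~~ odd i.
Proof.
rewrite /=; have := ltn_ord i; rewrite leq_eqVlt => /orP[/eqP e|lt].
  have o : odd i.+1 = odd m by rewrite e.
  by rewrite e modnn /=; move: m_even; rewrite -o /= negbK => ->.
by rewrite modn_small.
Qed.

Definition parity_blocks (j : 'I_2) := (\sum_(i < m | odd i == odd j) U i)%MS.

Lemma parity_blocks_orth j k x y :
  j != k -> inS x (parity_blocks j) -> inS y (parity_blocks k) -> adj x *m y = 0.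
Proof.
move=> jk hx hy; apply: (orth_sum_l hx) => i /eqP oi w hw.
apply: (orth_sum_r hy) => i' /eqP oi' w' hw'.
apply: (od_orth hU.1) hw hw'.
by apply: contra (ord2_neq jk) => /eqP ii; rewrite -oi -oi' ii.
Qed.

Lemma parity_iso2 : iso2_decomp Bs parity_blocks.
Proof.
split; first split.
- move=> j; have jm : (j < m)%N by apply: leq_trans (ltn_ord j) m_gt1.
  apply: contra (od_nz hU.1 (Ordinal jm)) => /eqP V0; rewrite -submx0 -V0.
  exact: (sumsmx_sup (Ordinal jm)).
- by apply: orth_mxdirect => j k jk x y; apply: parity_blocks_orth.
- apply/eqmxP/andP; split; first exact: submx1.
  apply: submx_trans (od_cover hU.1) _; apply/sumsmx_subP => i _.
  apply: submx_trans (sumsmx_sup (inord (odd i) : 'I_2) _ (submx_refl _)) => //.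
  by apply: (sumsmx_sup i) => //; rewrite inordK ?oddb // ltnS leq_b1.
- by move=> j k jk x y; apply: parity_blocks_orth.
move=> j x y B hB hx /inS_sums[ys [hys ->]].
rewrite mulmx_sumr big1 // => i /eqP oi; rewrite -mulmxA.
apply: (orth_sum_l hx) => i' /eqP oi' w hw.
apply: (od_orth hU.1) hw (cyc_map hU hB (hys i _)); last by rewrite oi.
by apply/eqP => e; move: (odd_ordS i); rewrite -e oi oi'; case: (odd j).
Qed.

End ParityBlocks.

(* An isotropic 2-decomposition is a cyclic decomposition of length 2:
   B(V_j) is orthogonal to V_j, hence contained in the other block. *)
Lemma iso2_cyclic n (Bs : seq 'M[C]_n) (V : 'I_2 -> 'M[C]_n) :
  iso2_decomp Bs V -> cyclic_decomp Bs V.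
Proof.
case=> hO hiso; split => // j x B hB hx.
have [xs [hxs ey ePj]] := orth_split hO (B *m x).
have xj : xs j = 0.
  by rewrite -ePj; apply/oproj_0/perpP => w hw; rewrite mulmxA; apply: hiso hB hw hx.
rewrite ey; apply: inS_sum => k _; case: (eqVneq k j) => [->|kj].
  by rewrite xj inS0.
by rewrite -(ord2_other kj); apply: hxs.
Qed.

Lemma anticomm_mul n (X Y M : 'M[C]_n) :
  X *m M = - (M *m X) -> Y *m M = - (M *m Y) -> X *m Y *m M = M *m (X *m Y).
Proof.
move=> hX hY; rewrite -mulmxA hY mulmxN [X *m (M *m Y)]mulmxA hX mulNmx.
by rewrite opprK !mulmxA.
Qed.

Lemma anticomm_sym n (X M : 'M[C]_n) : X *m M = - (M *m X) -> M *m X = - (X *m M).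
Proof. by move=> h; rewrite h opprK. Qed.

Lemma ordS_ord0 : ordS (ord0 : 'I_2) = ord_max. Proof. exact: val_inj. Qed.
Lemma ordS_ord_max : ordS (ord_max : 'I_2) = ord0. Proof. exact: val_inj. Qed.

Section Grading.
Variables (n : nat) (Bs : seq 'M[C]_n) (V : 'I_2 -> 'M[C]_n).
Hypothesis hV : cyclic_decomp Bs V.

Definition grading : 'M[C]_n := oproj (V ord0) - oproj (V ord_max).

Lemma oproj2_sum : oproj (V ord0) + oproj (V ord_max) = 1%:M.
Proof.
rewrite -(sum_oproj hV.1) big_ord_recr big_ord1 /=.
by congr (oproj (V _) + _); apply: val_inj.
Qed.

Lemma grading_sq : grading *m grading = 1%:M.
Proof.
rewrite /grading mulmxBl !mulmxBr !(oproj_mul hV.1) !eqxx.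
have -> : (ord0 == ord_max :> 'I_2) = false by [].
have -> : (ord_max == ord0 :> 'I_2) = false by [].
by rewrite subr0 sub0r opprK -oproj2_sum.
Qed.

(* Z anticommutes with B and B^dagger, since B swaps V_0 and V_1. *)
Lemma grading_anti B : B \in Bs ->
  grading *m B = - (B *m grading) /\ grading *m adj B = - (adj B *m grading).
Proof.
move=> hB; rewrite /grading !mulmxBl !mulmxBr.
rewrite !(oproj_shift hV _ hB) !(oproj_shift_adj hV _ hB) ordS_ord0 ordS_ord_max.
by rewrite !opprB.
Qed.

Lemma oproj_grading : oproj (V ord0) = 2%:R^-1 *: (1%:M + grading).
Proof.
rewrite /grading -oproj2_sum addrACA subrr addr0 -mulr2n -scaler_nat scalerA.
by rewrite mulVf ?pnatr_eq0 // scale1r.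
Qed.

End Grading.

Section OddPeriod.
Variables (n p : nat) (Bs : seq 'M[C]_n) (U : 'I_p -> 'M[C]_n) (V : 'I_2 -> 'M[C]_n).
Hypotheses (hIQC : IQC Bs) (hU : cyclic_decomp Bs U) (hV : cyclic_decomp Bs V).
Hypothesis p_odd : odd p.

Local Notation Z := (grading V).
Local Notation shift s i := (iter s (@ordS p) i).

Lemma p_gt0 : (0 < p)%N.
Proof. exact: odd_gt0. Qed.

Lemma shift_ordS s i : shift s (ordS i) = ordS (shift s i).
Proof. by rewrite -iterSr iterS. Qed.

Definition shifted_grading s : 'M[C]_n :=
  \sum_i oproj (U (shift s i)) *m (Z *m oproj (U i)).

Lemma shifted_grading_vec s i y :
  inS y (U i) -> shifted_grading s *m y = oproj (U (shift s i)) *m (Z *m y).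
Proof.
move=> hy; rewrite /shifted_grading mulmx_suml (bigD1 i) //= -!mulmxA (oproj_id hy).
by rewrite big1 ?addr0 // => k ki; rewrite -!mulmxA (oproj_other hU.1 ki hy) !mulmx0.
Qed.

Lemma shifted_grading_anti s B : B \in Bs ->
  B *m shifted_grading s = - (shifted_grading s *m B).
Proof.
move=> hB; have BZ := anticomm_sym (grading_anti hV hB).1.
rewrite /shifted_grading mulmx_sumr mulmx_suml -sumrN.
rewrite [in RHS](reindex_inj (@ordS_inj p)); apply: eq_bigr => i _.
rewrite mulmxA (oproj_shift hU _ hB) -mulmxA [B *m (Z *m _)]mulmxA BZ mulNmx mulmxN.
by rewrite -[Z *m B *m _]mulmxA (oproj_shift hU _ hB) shift_ordS !mulmxA.
Qed.

Lemma shifted_grading_anti_adj s B : B \in Bs ->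
  shifted_grading s *m adj B = - (adj B *m shifted_grading s).
Proof.
move=> hB; have ZB := (grading_anti hV hB).2.
rewrite /shifted_grading mulmx_sumr mulmx_suml -sumrN.
rewrite [in RHS](reindex_inj (@ordS_inj p)); apply: eq_bigr => i _.
rewrite -mulmxA -[_ *m adj B]mulmxA (oproj_shift_adj hU _ hB).
rewrite [Z *m (adj B *m _)]mulmxA ZB mulNmx mulmxN.
by rewrite !mulmxA (oproj_shift_adj hU _ hB) shift_ordS.
Qed.

(* Z Y_s commutes with all B, B^dagger, so by Schur Y_s is a multiple of Z. *)
Lemma shifted_grading_scalar s : exists c, shifted_grading s = c *: Z.
Proof.
have [c hc] : exists c, Z *m shifted_grading s = c%:M.
  apply: (commutant_scalar hIQC) => B hB; have [ZB ZBa] := grading_anti hV hB.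
  split; apply: anticomm_mul => //; first exact/anticomm_sym/shifted_grading_anti.
  exact: shifted_grading_anti_adj.
by exists c; rewrite -[LHS]mul1mx -(grading_sq hV) -mulmxA hc mul_mx_scalar.
Qed.

(* For s not divisible by p, Y_s = 0: otherwise Z = c^-1 Y_s would map U_0
   into U_s and Z^2 = 1 would map U_0 into U_{2s}, whereas 2s <> 0 mod p. *)
Lemma shifted_grading_vanish s : ~~ (p %| s)%N -> shifted_grading s = 0.
Proof.
move=> ndvd; have [c hc] := shifted_grading_scalar s.
have [c0|cnz] := eqVneq c 0; first by rewrite hc c0 scale0r.
have Zshift k w : inS w (U k) -> inS (Z *m w) (U (shift s k)).
  move=> hw; have -> : Z *m w = c^-1 *: (shifted_grading s *m w).
    by rewrite hc -scalemxAl scalerA mulVf // scale1r.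
  by apply: inSZ; rewrite (shifted_grading_vec s hw); apply: oproj_in.
pose o := Ordinal p_gt0; have [x [hx xnz]] := nz_inS (od_nz hU.1 o).
have hx2 := Zshift _ _ (Zshift _ _ hx).
rewrite mulmxA (grading_sq hV) mul1mx -iterD in hx2.
have e : shift (s + s) o = o.
  by apply/eqP; apply: contraNT xnz => ne; apply/eqP; apply: (od_disj hU.1) ne hx2 hx.
have dvd2 : (p %| s * 2)%N.
  rewrite muln2 -addnn /dvdn; apply/eqP.
  by have := congr1 val e; rewrite iter_ordS_val add0n.
by move: dvd2; rewrite Gauss_dvdl ?coprimen2 // => dvd; rewrite dvd in ndvd.
Qed.

(* Hence Z = Y_0 preserves every block of U. *)
Lemma grading_stable i y : inS y (U i) -> inS (Z *m y) (U i).
Proof.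
move=> hy; suff -> : Z *m y = oproj (U i) *m (Z *m y) by apply: oproj_in.
rewrite -{1}[Z *m y]mul1mx -(sum_oproj hU.1) mulmx_suml (bigD1 i) //=.
rewrite big1 ?addr0 // => j ji; pose s := ((j + (p - i)) %% p)%N.
have hj : shift s i = j.
  apply: val_inj; rewrite iter_ordS_val /s modnDmr addnCA subnKC ?modnDr ?modn_small //.
  exact: ltnW (ltn_ord i).
have ndvd : ~~ (p %| s)%N.
  by apply: contra ji; rewrite /dvdn modn_mod -/s => /eqP s0; rewrite -hj s0.
by rewrite -hj -(shifted_grading_vec s hy) shifted_grading_vanish // mul0mx.
Qed.

Lemma oprojV_stable (j : 'I_2) i y : inS y (U i) -> inS (oproj (V j) *m y) (U i).
Proof.
move=> hy; have h0 : inS (oproj (V ord0) *m y) (U i).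
  rewrite (oproj_grading hV) -scalemxAl mulmxDl mul1mx.
  by apply/inSZ/inSD => //; apply: grading_stable.
case: (ord2P j) => ->; first exact: h0.
have -> : oproj (V ord_max) = 1%:M - oproj (V ord0).
  by rewrite -(oproj2_sum hV) addrAC subrr add0r.
by rewrite mulmxBl mul1mx; apply: inSB.
Qed.

Definition res_p (k : 'I_(p * 2)) : 'I_p := Ordinal (ltn_pmod k p_gt0).
Definition res_2 (k : 'I_(p * 2)) : 'I_2 := Ordinal (ltn_pmod k (isT : (0 < 2)%N)).
Definition refinement k := (U (res_p k) :&: V (res_2 k))%MS.

(* Chinese remainders: k |-> (k mod p, k mod 2) is a bijection, p being odd. *)
Lemma res_surj i (j : 'I_2) : exists k, res_p k = i /\ res_2 k = j.
Proof.
have oj : (odd j : nat) = j by case: j => [[|[|j]] hj].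
have lt : (i + (if odd i == odd j then 0 else p) < p * 2)%N.
  by rewrite muln2 -addnn; case: ifP => _; rewrite ?addn0; [apply: ltn_addr | rewrite ltn_add2r].
exists (Ordinal lt); split; apply: val_inj => /=.
  by case: ifP => _; rewrite ?addn0 ?modnDr modn_small.
rewrite modn2 oddD -[X in _ = X]oj; case: ifP => [/eqP e|/negbT]; first by rewrite /= addbF e.
by rewrite p_odd addbT; case: (odd i); case: (odd j).
Qed.

Lemma res_inj k k' : res_p k = res_p k' -> res_2 k = res_2 k' -> k = k'.
Proof.
move=> /(congr1 val) /= e1 /(congr1 val) /= e2; apply: val_inj => /=.
have : (k == k' %[mod p * 2])%N by rewrite chinese_remainder ?coprimen2 // e1 e2 !eqxx.
by rewrite !modn_small // => /eqP.
Qed.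

Lemma res_p_ordS k : res_p (ordS k) = ordS (res_p k).
Proof.
apply: val_inj => /=; rewrite modn_dvdm ?dvdn_mulr //.
by rewrite -[in RHS]addn1 modnDml addn1.
Qed.

Lemma res_2_ordS k : res_2 (ordS k) = ordS (res_2 k).
Proof.
apply: val_inj => /=; rewrite modn_dvdm ?dvdn_mull //.
by rewrite -[in RHS]addn1 modnDml addn1.
Qed.

Lemma refinement_map k x B : B \in Bs -> inS x (refinement k) -> inS (B *m x) (refinement (ordS k)).
Proof.
move=> hB; rewrite /refinement !inS_cap res_p_ordS res_2_ordS => /andP[h1 h2].
by rewrite (cyc_map hU hB h1) (cyc_map hV hB h2).
Qed.

Lemma refinement_orth k k' x y :
  k != k' -> inS x (refinement k) -> inS y (refinement k') -> adj x *m y = 0.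
Proof.
rewrite /refinement !inS_cap => kk /andP[x1 x2] /andP[y1 y2].
have [e1|n1] := eqVneq (res_p k) (res_p k'); last exact: (od_orth hU.1) n1 x1 y1.
have [e2|n2] := eqVneq (res_2 k) (res_2 k'); last exact: (od_orth hV.1) n2 x2 y2.
by move: kk; rewrite (res_inj e1 e2) eqxx.
Qed.

(* Each U_i is covered by the W_k, via y = P_{V_0} y + P_{V_1} y. *)
Lemma refinement_cover i y : inS y (U i) -> inS y (\sum_k refinement k)%MS.
Proof.
move=> hy; rewrite -[y]mul1mx -(oproj2_sum hV) mulmxDl.
have comp j : inS (oproj (V j) *m y) (\sum_k refinement k)%MS.
  have [k [ei ej]] := res_surj i j; apply: (inS_sumsI (i := k)) => //.
  by rewrite /refinement inS_cap ei ej oprojV_stable ?oproj_in.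
by apply: inSD; apply: comp.
Qed.

Lemma refinement_cyclic : cyclic_decomp Bs refinement.
Proof.
split; last by move=> k x B; apply: refinement_map.
split.
- move=> k; apply/negP => /eqP Wk.
  have [x [hx xnz]] := nz_inS (od_nz hU.1 (Ordinal p_gt0)).
  move/eqP: xnz; apply; apply: inS_zero; apply: inS_sub (refinement_cover hx) _.
  by rewrite big1 // => k' _; rewrite (cyclic_chain_zero k' hIQC refinement_map Wk).
- by apply: orth_mxdirect => k k' kk x y; apply: refinement_orth.
- apply/eqmxP/andP; split; first exact: submx1.
  apply: submx_trans (od_cover hU.1) _; apply/sumsmx_subP => i _.
  by apply: subS => y; apply: refinement_cover.
- by move=> k k' kk x y; apply: refinement_orth.
Qed.

End OddPeriod.

(* A property of naturals holding at 1 and bounded above has a largest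
   witness (classical choice makes it decidable). *)
Lemma ex_maxP (P : nat -> Prop) b : P 1%N -> (forall m, P m -> (m <= b)%N) ->
  exists p, P p /\ forall m, P m -> (m <= p)%N.
Proof.
move=> h1 hb; pose pb m : bool := excluded_middle_informative (P m).
have pbP m : reflect (P m) (pb m).
  by rewrite /pb; case: excluded_middle_informative => h; constructor.
have ex1 : exists m, pb m by exists 1%N; apply/pbP.
have ub m : pb m -> (m <= b)%N by move/pbP; apply: hb.
case: (ex_maxnP ex1 ub) => p /pbP hp hmax.
by exists p; split => // m /pbP; apply: hmax.
Qed.

(* Existence of the period: cyclic decompositions have length at most n,
   and the trivial decomposition has length 1. *)
Section Period.
Variables (n : nat) (Bs : seq 'M[C]_n).

(* Nonzero blocks of a direct sum have total rank at most n. *)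
Lemma cyclic_len m (U : 'I_m -> 'M[C]_n) : cyclic_decomp Bs U -> (m <= n)%N.
Proof.
case=> -[nz dx _ _] _; move: dx; rewrite mxdirectE /= => /eqP e.
have := rank_leq_col (\sum_(i < m) U i)%MS; rewrite e.
apply: leq_trans; rewrite -[X in (X <= _)%N]card_ord -sum1_card.
by apply: leq_sum => i _; rewrite lt0n mxrank_eq0 nz.
Qed.

Lemma trivial_cyclic : (0 < n)%N -> exists U : 'I_1 -> 'M[C]_n, cyclic_decomp Bs U.
Proof.
move=> npos; exists (fun _ => 1%:M); split; last by move=> *; apply: inS1.
split.
- move=> _; apply/negP => /eqP/matrixP/(_ (Ordinal npos) (Ordinal npos)).
  by rewrite !mxE eqxx => /eqP; rewrite oner_eq0.
- by apply: orth_mxdirect => i j; rewrite !ord1 eqxx.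
- by rewrite big_ord1.
- by move=> i j; rewrite !ord1 eqxx.
Qed.

Lemma period_exists : IQC Bs -> exists p, is_period Bs p.
Proof.
move=> hI; have bound m : (exists U : 'I_m -> 'M[C]_n, cyclic_decomp Bs U) -> (m <= n)%N.
  by case=> U; apply: cyclic_len.
have [p [hp hmax]] := ex_maxP (trivial_cyclic (IQC_npos hI)) bound.
by exists p; split => // m U hU; apply: hmax; exists U.
Qed.

End Period.

End Development.

Theorem lemma11p4 (C : numClosedFieldType) (n : nat) (Bs : seq 'M[C]_n) :
  IQC Bs ->
  ((exists U : 'I_2 -> 'M[C]_n, iso2_decomp Bs U) <->
   (exists p : nat, is_period Bs p /\ ~~ odd p)).
Proof.
move=> hI; split.
- (* an odd period p would be beaten by the refinement of length 2p *)
  case=> V hV; have [p [[U hU] hmax]] := period_exists hI.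
  exists p; split; first by split; [exists U | apply: hmax].
  apply/negP => p_odd; have := hmax _ _ (refinement_cyclic hI hU (iso2_cyclic hV) p_odd).
  by rewrite -{2}[p]muln1 leq_pmul2l ?odd_gt0.
- (* an even period p >= 1 groups into parity blocks *)
  case=> p [[[U hU] hmax] p_even]; have [U1 /hmax p1] := trivial_cyclic Bs (IQC_npos hI).
  have p2 : (1 < p)%N by rewrite ltn_neqAle p1 andbT; apply: contraNneq p_even => <-.
  by exists (parity_blocks U); apply: parity_iso2 hU p_even p2.
Qed.
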